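(* For every stratified space $(A,\Sigma)$ there exists a family of subsets $(W_X)_{X\in\Sigma}$ such that each $W_X$ is an open neighbourhood of $X$, and for $X,Y\in\Sigma$, $W_X$ intersects $W_Y$ if and only if $X$ and $Y$ are comparable (i.e. $X\le Y$ or $Y\le X$).
   Context: A stratified space $(A,\Sigma)$ is a second-countable metric space $A$ with a locally finite partition $\Sigma$ of $A$ into locally closed subsets (strata) such that whenever $Y\cap cl(X)\neq\emptyset$ one has $Y\subset cl(X)$; this is written $Y\le X$ (and $X$ is said to be incident to $Y$). The relation $\le$ is a partial order on $\Sigma$. *)

From HB Require Import structures.
From mathcomp Require Import all_boot all_order all_algebra.
From mathcomp Require Import all_classical all_reals topology normedtype.
Set Implicit Arguments. Unset Strict Implicit. Unset Printing Implicit Defensive.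
Import Order.TTheory GRing.Theory Num.Theory.
Local Open Scope classical_set_scope.

(* The space A is the whole carrier type T. *)

Definition is_partition {T : Type} (S : set (set T)) : Prop :=
  [/\ (forall X, S X -> X !=set0),
      (forall X Y, S X -> S Y -> X `&` Y !=set0 -> X = Y) &
      (forall x : T, exists2 X, S X & X x)].

Definition locally_finite_family {T : topologicalType} (S : set (set T)) : Prop :=
  forall x : T, exists2 U, nbhs x U & finite_set [set X | S X /\ X `&` U !=set0].

Definition locally_closed {T : topologicalType} (X : set T) : Prop :=
  exists U C, [/\ open U, closed C & X = U `&` C].

Definition strat_le {T : topologicalType} (Y X : set T) : Prop :=
  Y `<=` closure X.

Definition is_stratification {T : topologicalType} (S : set (set T)) : Prop :=
  [/\ is_partition S, locally_finite_family S,
      (forall X, S X -> locally_closed X) &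
      (forall X Y, S X -> S Y -> Y `&` closure X !=set0 -> strat_le Y X)].

From HB Require Import structures.
From mathcomp Require Import all_boot all_order all_algebra.
From mathcomp Require Import all_classical all_reals topology normedtype.
From mathcomp Require Import lra.
Set Implicit Arguments. Unset Strict Implicit.
Local Open Scope classical_set_scope.

(* Around a point x of a stratum X, local finiteness and the frontier condition
   give a ball B(x, r_x) missing every stratum Y with not X <= Y.  Let W_X be
   the union of the balls B(x, r_x / 2), x in X.  If W_X meets W_Y, there are
   x in X and y in Y with d(x, y) < r_x/2 + r_y/2 <= max(r_x, r_y), so the
   larger of the two balls meets the other stratum, which forces
   comparability.  Conversely, if X <= Y then the open set W_X contains a
   point of X, which lies in the closure of Y, so W_X meets Y, which lies
   in W_Y. *)

Lemma locally_finite_nbhs_setC_bigcup {T : topologicalType} (S P : set (set T))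
    (x : T) :
  locally_finite_family S -> P `<=` S -> (forall Y, P Y -> ~ closure Y x) ->
  nbhs x (~` \bigcup_(Y in P) Y).
Proof.
move=> lfS PS xNcl; have [U Ux finU] := lfS x.
set F := [set Y | P Y /\ Y `&` U !=set0].
have finF : finite_set F by apply: sub_finite_set finU => Y [/PS].
have clF : closed (\bigcup_(Y in F) closure Y).
  by apply: closed_bigcup => // Y _; exact: closed_closure.
have : nbhs x (U `&` ~` \bigcup_(Y in F) closure Y).
  apply: filterI => //; apply: open_nbhs_nbhs; split; first exact: closed_openC.
  by case=> Y [PY _]; exact: xNcl.
apply: filterS => z [Uz NFz] [Y PY Yz]; apply: NFz.
by exists Y; [split => //; exists z | exact: subset_closure].
Qed.

Lemma stratification_nbhs_avoid {T : topologicalType} (S : set (set T)) :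
  is_stratification S -> forall X x, S X -> X x ->
  nbhs x (~` \bigcup_(Y in [set Y | S Y /\ ~ strat_le X Y]) Y).
Proof.
case=> _ lfS _ frontier X x SX Xx.
apply: locally_finite_nbhs_setC_bigcup => // [Y [] //|Y [SY NXY] clYx].
by apply: NXY; apply: frontier => //; exists x.
Qed.

Lemma strat_le_open_meet {T : topologicalType} (X Y U V : set T) :
  X !=set0 -> strat_le X Y -> open U -> X `<=` U -> Y `<=` V ->
  U `&` V !=set0.
Proof.
move=> [x Xx] XY oU XU YV.
have [y [Yy Uy]] := XY x Xx U (open_nbhs_nbhs (conj oU (XU x Xx))).
by exists y; split => //; exact: YV.
Qed.

Section ComparableNeighbourhoods.
Import Order.TTheory GRing.Theory Num.Theory.
Local Open Scope ring_scope.

Variables (R : realFieldType) (T : pseudoMetricType R) (S : set (set T))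
  (le : set T -> set T -> Prop).

Hypothesis nbhs_avoid : forall X x, S X -> X x ->
  nbhs x (~` \bigcup_(Y in [set Y | S Y /\ ~ le X Y]) Y).

Lemma exists_nbhs_meet_comparable : exists W : set T -> set T,
  [/\ forall X, open (W X), forall X, X `<=` W X &
      forall X Y, S X -> S Y -> W X `&` W Y !=set0 -> le X Y \/ le Y X].
Proof.
have /choice [r rP] : forall X, exists r : T -> R, forall x, 0 < r x /\
    (S X -> X x -> forall Y, S Y -> ~ le X Y -> forall z, ball x (r x) z -> ~ Y z).
  move=> X; suff /choice [r rP] : forall x, exists e : R, 0 < e /\
      (S X -> X x -> forall Y, S Y -> ~ le X Y -> forall z, ball x e z -> ~ Y z).
    by exists r.
  move=> x; have [[SX Xx]|NSXx] := pselect (S X /\ X x); last first.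
    by exists 1; split => // SX Xx; case: NSXx.
  have /nbhs_ballP [e e0 ball_avoid] := nbhs_avoid SX Xx.
  by exists e; split => // _ _ Y SY NXY z /ball_avoid NYz Yz; apply: NYz; exists Y.
have r_gt0 X x : 0 < r X x / 2 by rewrite divr_gt0 //; case: (rP X x).
have near_center X Y x y : S X -> S Y -> X x -> Y y -> r Y y <= r X x ->
    ball x (r X x / 2 + r Y y / 2) y -> le X Y.
  move=> SX SY Xx Yy rYX bxy; apply: contrapT => NXY.
  case: (rP X x) => _ /(_ SX Xx Y SY NXY y); apply => //.
  by apply: le_ball bxy; lra.
exists (fun X => \bigcup_(x in X) (ball x (r X x / 2))°); split.
- by move=> X; apply: bigcup_open => x _; exact: open_interior.
- by move=> X x Xx; exists x => //; exact: nbhsx_ballx.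
move=> X Y SX SY [p [[x Xx /interior_subset bxp] [y Yy /interior_subset byp]]].
have bxy := ball_triangle bxp (ball_sym byp).
have [rYX|/ltW rXY] := leP (r Y y) (r X x).
  by left; exact: near_center bxy.
by right; apply: (near_center Y X y x) => //; rewrite addrC; exact: ball_sym.
Qed.

End ComparableNeighbourhoods.

Theorem lemma1p3p17 (R : realType) (T : pseudoMetricType R)
  (hT : hausdorff_space T) (scT : @second_countable T)
  (S : set (set T)) (hS : is_stratification S) :
  exists W : set T -> set T,
    (forall X, S X -> open (W X) /\ X `<=` W X) /\
    (forall X Y, S X -> S Y ->
       (W X `&` W Y !=set0 <-> (strat_le X Y \/ strat_le Y X))).
Proof.
have [W [oW XW meetW]] :=
  exists_nbhs_meet_comparable (stratification_nbhs_avoid hS).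
exists W; split => [X _|X Y SX SY]; first by split.
split; first exact: meetW.
have [[nonempty _ _] _ _ _] := hS.
case=> [XY|YX]; first exact: strat_le_open_meet (nonempty X SX) XY (oW X) (XW X) (XW Y).
by rewrite setIC; exact: strat_le_open_meet (nonempty Y SY) YX (oW Y) (XW Y) (XW X).
Qed.
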